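(* Let $p$ be an odd prime, $q=p^m$, and let $k$ be an integer with $0<k<m$. Let $b,c\in\mathbb F_{q^2}^*$ with $\mathrm N(b)=\mathrm N(c)$, let $c_0\in\mathbb F_{q^2}$, let $\ell(x)=(bx^q+cx)^{p^k}-c_0(bx^q+cx)$ and $f(x)=x^{q+1}+\ell(x^2)$. Then $f$ is a planar function on $\mathbb F_{q^2}$ if and only if all of the following hold: (i) $(b^{-1}c)^{\frac{q+1}2}=-1$; (ii) $\omega^{q-1}\ne b^qc^{-1}$ for every $\omega\in\mathbb F_{q^2}^*$ such that $\omega^{p^k-1}=c_0$; (iii) $\omega^{q-1}\ne b^qc^{-1}$ for every $\omega\in\mathbb F_{q^2}^*$ such that $((b^{-1}c^q)^{p^k}-1)\omega^{p^k-1}=b^{-1}c^qc_0^q-c_0$. In particular, if $d=\gcd(p^k-1,q^2-1)$ divides $q-1$ (equivalently, $\gcd(k,2m)$ divides $m$), then conditions (ii) and (iii) are respectively equivalent to (ii') $c_0^{(q-1)/d}\ne(b^qc^{-1})^{(p^k-1)/d}$, and (iii') $(b^{-1}c^qc_0^q-c_0)^{(q-1)/d}\ne((b^{-1}c^q)^{p^k}-1)^{(q-1)/d}(b^qc^{-1})^{(p^k-1)/d}$.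
   Context: $\mathrm N$ denotes the norm from $\mathbb F_{q^2}$ to $\mathbb F_q$, $\mathrm N(u)=u^{q+1}$. A function $f$ on $\mathbb F_{q^n}$ is planar if for every $c\in\mathbb F_{q^n}^*$ the map $x\mapsto f(x+c)-f(x)$ is a permutation of $\mathbb F_{q^n}$. *)

From mathcomp Require Import all_boot all_order all_algebra all_field.
Set Implicit Arguments. Unset Strict Implicit. Unset Printing Implicit Defensive.
Import GRing.Theory.
Local Open Scope ring_scope.

Definition normF (F : finFieldType) (q : nat) (u : F) : F := u ^+ q.+1.

Definition planar (F : finFieldType) (f : F -> F) : Prop :=
  forall c : F, c != 0 -> bijective (fun x => f (x + c) - f x).

Definition ell (F : finFieldType) (p m k : nat) (b c c0 : F) (x : F) : F :=
  (b * x ^+ (p ^ m) + c * x) ^+ (p ^ k) - c0 * (b * x ^+ (p ^ m) + c * x).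

Definition fpoly (F : finFieldType) (p m k : nat) (b c c0 : F) (x : F) : F :=
  x ^+ (p ^ m).+1 + ell p m k b c c0 (x ^+ 2).

From mathcomp Require Import all_boot all_order all_algebra all_field.
From mathcomp Require Import cyclic ring zify.
Import GRing.Theory.
Local Open Scope ring_scope.
Set Implicit Arguments. Unset Strict Implicit.

(* Write M(u) = b u^q + c u and L(u) = M(u)^r - c0 M(u) with r = p^k.  Both
   maps are additive, so f(x + a) - f(x) = f(a) + D_a(x) with D_a(x) =
   a x^q + a^q x + L(2ax) additive in x, and f is planar iff D_a has no nonzero
   root for a != 0.
   For a root x, u = 2ax has L(u) = -(a x^q + a^q x) in F_q.  Since N(b) = N(c),
   M(u)^q = t M(u) with t = b^q / c; hence either M(u) = 0, which makes b^-1 c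
   the square of a (q-1)-th power and contradicts (i), or v = M(u) satisfies
   v^(q-1) = t and the equation of (iii).  Conversely, if (i) fails a root is
   found inside the kernel of M, and if (iii) fails with witness v a root is
   found on the F_q-line M^-1(v): by pigeonhole, some point of that line has
   the same norm as some element of trace -L(v), and Hilbert 90 turns this
   coincidence into a root.  Condition (ii) follows from (iii).  The gcd forms
   of (ii) and (iii) come from the cyclicity of the units of F_(q^2). *)

(** * Roots of unity in a finite field *)

Section UnitRoots.

Variable F : finFieldType.

Lemma expf_card_unit (x : F) : x != 0 -> x ^+ #|F|.-1 = 1.
Proof.
move=> x_neq0; have := expf_card x; rewrite -(ltn_predK (finNzRing_gt1 F)) exprS.
by move/(canRL (mulKf x_neq0)); rewrite mulVf.
Qed.

Lemma unity_root_neq0 (n : nat) (z : F) : (0 < n)%N -> z ^+ n = 1 -> z != 0.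
Proof.
move=> n_gt0 z_unity; apply: contra_eq_neq z_unity => ->.
by rewrite expr0n gtn_eqF // eq_sym oner_eq0.
Qed.

Lemma prim_root_exists : {g : F | (#|F|.-1).-primitive_root g}.
Proof.
have F1_gt0 : (0 < #|F|.-1)%N by rewrite -subn1 subn_gt0 finNzRing_gt1.
have units_unity : all (#|F|.-1).-unity_root (enum (predC1 (0 : F))).
  apply/allP => x; rewrite mem_enum /= unity_rootE => x_neq0.
  by rewrite expf_card_unit.
have := has_prim_root F1_gt0 units_unity (enum_uniq _).
rewrite -cardE cardC1 leqnn => /(_ isT) /hasP has_g.
by apply: sigW; case: has_g => g _ g_prim; exists g.
Qed.

Lemma unity_root_expr_onto (n e : nat) (x : F) :
  (0 < e)%N -> (n %| #|F|.-1)%N -> x ^+ (n %/ gcdn e n) = 1 ->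
  exists2 z : F, z ^+ n = 1 & z ^+ e = x.
Proof.
move=> e_gt0 n_dvd x_unity; have [g g_prim] := prim_root_exists.
have n_gt0 : (0 < n)%N by apply: dvdn_gt0 n_dvd; rewrite -subn1 subn_gt0 finNzRing_gt1.
set N := #|F|.-1 in g_prim n_dvd; set s := (N %/ n)%N; set d := gcdn e n.
have N_eq : N = (s * n)%N by rewrite divnK.
have d_gt0 : (0 < d)%N by rewrite gcdn_gt0 e_gt0.
have n_eq : n = (d * (n %/ d))%N by rewrite mulnC divnK ?dvdn_gcdr.
have nd_gt0 : (0 < n %/ d)%N by rewrite divn_gt0 // dvdn_leq ?dvdn_gcdr.
have xN : x ^+ N = 1.
  by rewrite N_eq {1}n_eq mulnA mulnC exprM x_unity expr1n.
move: x_unity; have [[i _] /= ->] := prim_rootP g_prim xN.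
rewrite -exprM => /eqP; rewrite -(prim_order_dvd g_prim) -/d.
rewrite N_eq {1}n_eq mulnA dvdn_pmul2r // => /dvdnP[j ->].
have [u v uv _] := egcdnP n e_gt0.
exists (g ^+ (s * u * j)); rewrite -exprM.
  have -> : (s * u * j * n = N * (u * j))%N by rewrite N_eq; nia.
  by rewrite exprM (prim_expr_order g_prim) expr1n.
have -> : (s * u * j * e = N * (j * v) + j * (s * d))%N by rewrite N_eq; nia.
by rewrite exprD exprM (prim_expr_order g_prim) expr1n mul1r.
Qed.

End UnitRoots.

(** * Fields of order q^2 *)

Section QuadraticExtension.

Variables (F : finFieldType) (q : nat).
Hypothesis cardF : #|F| = (q ^ 2)%N.

Lemma q_gt1 : (1 < q)%N.
Proof. by have := finNzRing_gt1 F; rewrite cardF -{1}(exp1n 2) ltn_exp2r. Qed.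

Lemma card_unit_sq : #|F|.-1 = ((q - 1) * q.+1)%N.
Proof. by rewrite cardF; have := q_gt1; nia. Qed.

Lemma exprqq (x : F) : (x ^+ q) ^+ q = x.
Proof. by rewrite -exprM mulnn -cardF expf_card. Qed.

Lemma exprq_sub1 (x : F) : x ^+ q = x ^+ (q - 1) * x.
Proof. by rewrite -exprSr subn1 prednK // ltnW // q_gt1. Qed.

Lemma expr_unit_q1 (x : F) : x != 0 -> x ^+ ((q - 1) * q.+1) = 1.
Proof. by rewrite -card_unit_sq; apply: expf_card_unit. Qed.

Lemma hilbert90 (t : F) : t ^+ q.+1 = 1 -> exists2 w : F, w != 0 & w ^+ (q - 1) = t.
Proof.
move=> t_norm; have q1_gt0 : (0 < q - 1)%N by have := q_gt1; lia.
have [|w w_unit <-] := @unity_root_expr_onto F _ (q - 1) t q1_gt0 (dvdnn _).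
  by rewrite card_unit_sq gcdnMr mulKn.
exists w => //; apply: unity_root_neq0 w_unit.
by rewrite card_unit_sq muln_gt0 q1_gt0.
Qed.

Lemma exists_trace_of_norm (y w : F) : y != 0 -> w ^+ q * w = y ^+ q * y ->
  exists2 a : F, a != 0 & a * (y / a) ^+ q + a ^+ q * (y / a) = w ^+ q + w.
Proof.
move=> y_neq0 norm_wy; have yN_neq0 : y ^+ q * y != 0 by rewrite mulf_neq0 ?expf_neq0.
have w_neq0 : w != 0 by apply: contra_eq_neq norm_wy => ->; rewrite mulr0 eq_sym.
have [|a a_neq0 a_q1] := hilbert90 (t := w / y).
  by rewrite exprSr expr_div_n mulf_div norm_wy divff.
exists a => //; rewrite expr_div_n exprq_sub1 a_q1.
have -> : a * (y ^+ q / (w / y * a)) = y ^+ q * y / w.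
  by field; rewrite a_neq0 y_neq0 w_neq0.
by rewrite -norm_wy mulfK //; congr (_ + _); field; rewrite a_neq0 y_neq0.
Qed.

Section GcdCriterion.

Variables (e : nat) (t : F).
Hypotheses (e_gt0 : (0 < e)%N) (t_norm : t ^+ q.+1 = 1).
Let d := gcdn e (q ^ 2 - 1).
Hypothesis d_dvd : (d %| q - 1)%N.

Let d_gt0 : (0 < d)%N. Proof. by rewrite gcdn_gt0 e_gt0. Qed.

Let qd_gt0 : (0 < (q - 1) %/ d)%N.
Proof. by rewrite divn_gt0 // dvdn_leq // subn_gt0 q_gt1. Qed.

Let t_neq0 : t != 0.
Proof. by apply: unity_root_neq0 t_norm. Qed.

Lemma expr_system_solvable (y : F) :
  (exists2 w : F, w ^+ e = y & w ^+ (q - 1) = t)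
    <-> y ^+ ((q - 1) %/ d) = t ^+ (e %/ d).
Proof.
split=> [[w <- <-] | y_crit].
  by rewrite -!exprM !muln_divA ?dvdn_gcdl // mulnC.
have y_neq0 : y != 0.
  apply: contra_eq_neq y_crit => ->; rewrite expr0n gtn_eqF //.
  by rewrite eq_sym expf_neq0.
have [w0 w0_neq0 w0_q1] := hilbert90 t_norm.
have Y_unity : (y / w0 ^+ e) ^+ ((q - 1) %/ d) = 1.
  rewrite expr_div_n y_crit -w0_q1 -!exprM muln_divA ?dvdn_gcdl // mulnC -muln_divA //.
  by rewrite divff // expf_neq0.
have gcd_eq : gcdn e (q - 1) = d.
  apply/eqP; rewrite eqn_dvd !dvdn_gcd dvdn_gcdl d_dvd dvdn_gcdl /= andbT.
  by apply: dvdn_trans (dvdn_gcdr _ _) _; apply/dvdnP; exists q.+1; have := q_gt1; nia.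
have := @unity_root_expr_onto F (q - 1) e (y / w0 ^+ e) e_gt0.
rewrite gcd_eq card_unit_sq dvdn_mulr // => /(_ isT Y_unity)[z z_q1 z_e].
by exists (w0 * z); rewrite exprMn ?z_e ?z_q1 ?mulr1 // mulrC divfK ?expf_neq0.
Qed.

Lemma no_root_criterion (A B : F) :
  (forall w : F, w != 0 -> A * w ^+ e = B -> w ^+ (q - 1) != t)
    <-> B ^+ ((q - 1) %/ d) != A ^+ ((q - 1) %/ d) * t ^+ (e %/ d).
Proof.
have [-> | A_neq0] := eqVneq A 0.
  rewrite expr0n gtn_eqF // mul0r.
  have [-> | B_neq0] := eqVneq B 0; last first.
    split=> [_ | _ w _]; first by rewrite expf_neq0.
    by rewrite mul0r => /eqP; rewrite eq_sym (negbTE B_neq0).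
  rewrite expr0n gtn_eqF // eqxx; split=> // no_root.
  have [w0 w0_neq0 w0_q1] := hilbert90 t_norm.
  by have := no_root w0 w0_neq0 (mul0r _); rewrite w0_q1 eqxx.
have An_neq0 := expf_neq0 ((q - 1) %/ d) A_neq0.
rewrite [A ^+ _ * _]mulrC -(can2_eq (divfK An_neq0) (mulfK An_neq0)) -expr_div_n.
split=> [no_root | B_crit w w_neq0 A_w]; apply/negP => /eqP.
  move/expr_system_solvable => [w w_e w_q1].
  have w_neq0 : w != 0.
    by apply: contra_eq_neq w_q1 => ->; rewrite expr0n gtn_eqF ?subn_gt0 ?q_gt1 // eq_sym.
  by have := no_root w w_neq0; rewrite w_e mulrC divfK // w_q1 eqxx => /(_ erefl).
move=> w_q1; apply/negP: B_crit; rewrite negbK; apply/eqP/expr_system_solvable.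
by exists w; rewrite // -A_w mulrC mulKf.
Qed.

End GcdCriterion.

Section OddCharacteristic.

Hypotheses (q_odd : odd q) (q_pchar : [pchar F].-nat q).

Lemma exprDq (x y : F) : (x + y) ^+ q = x ^+ q + y ^+ q.
Proof. exact: exprDn_pchar. Qed.

Lemma exprBq (x y : F) : (x - y) ^+ q = x ^+ q - y ^+ q.
Proof. by rewrite exprDq exprNn_pchar. Qed.

Lemma two_neq0 : (2%:R : F) != 0.
Proof.
have p_pchar := pnatP _ (ltnW q_gt1) q_pchar _ (pdiv_prime q_gt1) (pdiv_dvd q).
rewrite -(dvdn_pcharf p_pchar); apply: contraL q_odd => p_dvd2.
have p_eq2 : pdiv q = 2%N.
  by have := dvdn_leq (isT : 0 < 2)%N p_dvd2; have := prime_gt1 (pdiv_prime q_gt1); lia.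
by rewrite -dvdn2 -p_eq2 pdiv_dvd.
Qed.

Lemma exprq_two : (2%:R : F) ^+ q = 2%:R.
Proof. by rewrite exprDq expr1n. Qed.

Lemma two_exprq_sub1 : (2%:R : F) ^+ (q - 1) = 1.
Proof. by apply: (mulIf two_neq0); rewrite -exprq_sub1 exprq_two mul1r. Qed.

Lemma double_neq0 (y : F) : y != 0 -> y *+ 2 != 0.
Proof. by move=> y_neq0; rewrite -mulr_natr mulf_neq0 ?two_neq0. Qed.

Lemma half_q1 : (2 * (q.+1 %/ 2))%N = q.+1.
Proof. by rewrite mulnC divnK // dvdn2 /= q_odd. Qed.

Lemma exprN_q1 (x : F) : (- x) ^+ q.+1 = x ^+ q.+1.
Proof. by rewrite exprNn -signr_odd /= q_odd expr0 mul1r. Qed.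

Lemma sqr_of_euler (z : F) :
  z ^+ ((q - 1) * (q.+1 %/ 2)) = 1 -> exists a : F, a ^+ 2 = z.
Proof.
have N_eq : #|F|.-1 = ((q - 1) * (q.+1 %/ 2) * 2)%N.
  by rewrite -mulnA divnK ?card_unit_sq // dvdn2 /= q_odd.
move=> z_euler; have [|a _ <-] := @unity_root_expr_onto F _ 2 z isT (dvdnn _).
  by rewrite N_eq gcdnMl mulnK.
by exists a.
Qed.

Let Fq := [set x : F | x ^+ q == x].

Lemma card_Fq : (#|Fq| <= q)%N.
Proof.
pose P : {poly F} := 'X^q - 'X.
have size_P : size P = q.+1.
  by rewrite size_polyDl size_polyXn // size_polyN size_polyX ltnS q_gt1.
have P_neq0 : P != 0 by rewrite -size_poly_eq0 size_P.
rewrite cardE -ltnS -size_P max_poly_roots ?enum_uniq //.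
apply/allP => x; rewrite mem_enum inE => /eqP x_fixed.
by rewrite /root !hornerE x_fixed subrr.
Qed.

Lemma card_sqr_Fq : (q.+1 %/ 2 <= #|[set y ^+ 2 | y in Fq]|)%N.
Proof.
have [g g_prim] := prim_root_exists F.
set h := q./2; set Sq := [set y ^+ 2 | y in Fq].
have q_eq : q = (2 * h).+1 by rewrite -[q in LHS](odd_double_half q) q_odd mul2n.
have N_eq : #|F|.-1 = (4 * h * (h + 1))%N by rewrite card_unit_sq q_eq; nia.
rewrite N_eq in g_prim.
have g_neq0 : g != 0.
  by apply: unity_root_neq0 (prim_expr_order g_prim); have := q_gt1; nia.
(* g^(2(h+1)) generates the units of F_q, so the g^(4(h+1)j), j < h, are
   distinct nonzero squares in F_q. *)
pose f (j : 'I_h) := g ^+ (4 * (h + 1) * j).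
have f_inj : injective f.
  move=> i j /eqP; rewrite /f (eq_prim_root_expr g_prim) !modn_small.
  - by move=> /eqP ij; apply: val_inj => /=; nia.
  - by have := ltn_ord i; have := ltn_ord j; nia.
  - by have := ltn_ord i; have := ltn_ord j; nia.
have f_Sq : [set f j | j : 'I_h] \subset Sq :\ 0.
  apply/subsetP => _ /imsetP[j _ ->]; rewrite !inE /f expf_neq0 //=.
  apply/imsetP; exists (g ^+ (2 * (h + 1) * j)).
    2: by rewrite -exprM; congr (_ ^+ _); nia.
  rewrite inE -exprM; apply/eqP.
  have -> : (2 * (h + 1) * j * q = 2 * (h + 1) * j + 4 * h * (h + 1) * j)%N.
    by rewrite q_eq; nia.
  by rewrite exprD (exprM g (4 * h * (h + 1))) (prim_expr_order g_prim) expr1n mulr1.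
have Sq0 : (0 : F) \in Sq by apply/imsetP; exists 0; rewrite ?inE expr0n // q_eq.
have half_eq : (q.+1 %/ 2 = h.+1)%N by rewrite divn2 /= uphalf_half q_odd.
have := subset_leq_card f_Sq.
by rewrite card_imset // card_ord (cardsD1 0 Sq) Sq0 half_eq.
Qed.

Lemma Fq_sqr_meet (c1 a1 c2 a2 : F) : a1 != 0 -> a2 != 0 ->
  c1 ^+ q = c1 -> a1 ^+ q = a1 -> c2 ^+ q = c2 -> a2 ^+ q = a2 ->
  exists s r : F, [/\ s ^+ q = s, r ^+ q = r & c1 + a1 * s ^+ 2 = c2 + a2 * r ^+ 2].
Proof.
move=> a1_neq0 a2_neq0 c1_fix a1_fix c2_fix a2_fix.
set Sq := [set y ^+ 2 | y in Fq].
set A := [set c1 + a1 * z | z in Sq]; set B := [set c2 + a2 * z | z in Sq].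
have card_A : #|A| = #|Sq| by apply: card_imset => x y /addrI /(mulfI a1_neq0).
have card_B : #|B| = #|Sq| by apply: card_imset => x y /addrI /(mulfI a2_neq0).
have AB_Fq : A :|: B \subset Fq.
  apply/subsetP => x; rewrite inE => /orP[] /imsetP[_ /imsetP[y + ->] ->];
  rewrite !inE => /eqP y_fix;
  by rewrite exprDq exprMn exprAC y_fix ?c1_fix ?a1_fix ?c2_fix ?a2_fix.
have [AB0 | [x]] := set_0Vmem (A :&: B).
  exfalso; move: (leq_trans (subset_leq_card AB_Fq) card_Fq).
  rewrite cardsU AB0 cards0 subn0 card_A card_B.
  have := card_sqr_Fq; rewrite -/Sq.
  have := half_q1; lia.
rewrite inE => /andP[/imsetP[_ /imsetP[s s_Fq ->] ->] /imsetP[_ /imsetP[r r_Fq ->] x_eq]].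
by exists s, r; move: s_Fq r_Fq; rewrite !inE => /eqP-> /eqP->.
Qed.

Lemma norm_Fq_line (y0 z0 : F) : z0 != 0 ->
  exists2 h : F, h ^+ q = h & forall s : F, s ^+ q = s ->
    (y0 + (s - h) * z0) ^+ q * (y0 + (s - h) * z0)
      = (y0 - h * z0) ^+ q * (y0 - h * z0) + z0 ^+ q * z0 * s ^+ 2.
Proof.
move=> z0_neq0; set T := y0 * z0 ^+ q + y0 ^+ q * z0; set N0 := z0 ^+ q * z0.
have N0_neq0 : N0 != 0 by rewrite mulf_neq0 ?expf_neq0.
have N0q : N0 ^+ q = N0 by rewrite exprMn exprqq mulrC.
have Tq : T ^+ q = T by rewrite exprDq !exprMn !exprqq addrC.
(* Completing the square along the line kills the cross term T s. *)
set h := T / (2%:R * N0).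
have hq : h ^+ q = h by rewrite expr_div_n exprMn exprq_two N0q Tq.
have T_eq : T = h * (2%:R * N0) by rewrite divfK // mulf_neq0 ?two_neq0.
clearbody h.
exists h => // s sq; rewrite exprDq exprBq !exprMn exprBq sq hq.
apply/eqP; rewrite -subr_eq0; apply/eqP.
transitivity (s * (T - h * (2%:R * N0))); first by rewrite /T /N0; ring.
by rewrite -T_eq subrr mulr0.
Qed.

Lemma exists_exprq_oppr : exists2 l : F, l != 0 & l ^+ q = - l.
Proof.
have [|l l_neq0 l_q1] := hilbert90 (t := -1); first by rewrite exprN_q1 expr1n.
by exists l; rewrite // exprq_sub1 l_q1 mulN1r.
Qed.

(** * Planarity of f *)

Variables (r : nat) (b c c0 : F).
Hypothesis r_pchar : [pchar F].-nat r.

Definition M_lin (u : F) := b * u ^+ q + c * u.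
Definition L_lin (u : F) := M_lin u ^+ r - c0 * M_lin u.
Definition f_quad (x : F) := x ^+ q.+1 + L_lin (x ^+ 2).
Definition D_lin (a x : F) := a * x ^+ q + a ^+ q * x + L_lin (x * a *+ 2).

Lemma M_linZ (k u : F) : k ^+ q = k -> M_lin (k * u) = k * M_lin u.
Proof. by move=> kq; rewrite /M_lin exprMn kq; ring. Qed.

Lemma M_linD (u v : F) : M_lin (u + v) = M_lin u + M_lin v.
Proof. by rewrite /M_lin exprDq; ring. Qed.

Lemma L_linD (u v : F) : L_lin (u + v) = L_lin u + L_lin v.
Proof. by rewrite /L_lin M_linD exprDn_pchar //; ring. Qed.

Lemma f_quad_diff (a x : F) : f_quad (x + a) - f_quad x = f_quad a + D_lin a x.
Proof. by rewrite /f_quad /D_lin sqrrD !L_linD !exprS exprDq; ring. Qed.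

Lemma D_linD (a x y : F) : D_lin a (x + y) = D_lin a x + D_lin a y.
Proof. by rewrite /D_lin exprDq mulrDl mulrnDl L_linD; ring. Qed.

Lemma D_lin0 (a : F) : D_lin a 0 = 0.
Proof. by apply: (addIr (D_lin a 0)); rewrite -D_linD !add0r. Qed.

Lemma planar_f_quadE :
  planar f_quad <-> forall a x : F, a != 0 -> x != 0 -> D_lin a x != 0.
Proof.
split=> [f_planar a x a_neq0 | D_inj a a_neq0].
  apply: contra_neq => D_ax0; have [g fK _] := f_planar a a_neq0.
  by rewrite -[x](fK) -[0](fK) /= !f_quad_diff D_ax0 D_lin0.
apply: injF_bij => x y /=; rewrite !f_quad_diff => /addrI /eqP.
rewrite -subr_eq0 -[x in D_lin a x](subrK y) D_linD addrK => /eqP D0.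
have [/eqP|/(D_inj a _ a_neq0)] := eqVneq (x - y) 0; first by rewrite subr_eq0 => /eqP.
by rewrite D0 eqxx.
Qed.

Lemma D_lin_root_of_norm (y w : F) : y != 0 -> w ^+ q * w = y ^+ q * y ->
  w ^+ q + w = - L_lin (y *+ 2) -> exists a x : F, [/\ a != 0, x != 0 & D_lin a x = 0].
Proof.
move=> y_neq0 norm_wy trace_w; have [a a_neq0 a_tr] := exists_trace_of_norm y_neq0 norm_wy.
exists a, (y / a); split; rewrite ?mulf_neq0 ?invr_neq0 //.
by rewrite /D_lin a_tr divfK // trace_w addNr.
Qed.

Lemma r_gt0 : (0 < r)%N.
Proof. by case/andP: r_pchar. Qed.

Lemma L_lin_eq0 (u : F) : M_lin u = 0 -> L_lin u = 0.
Proof. by move=> Mu0; rewrite /L_lin Mu0 expr0n gtn_eqF ?r_gt0 // mulr0 subr0. Qed.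

Lemma L_fixedE (t v : F) : v != 0 -> v ^+ q = t * v ->
  ((v ^+ r - c0 * v) ^+ q == v ^+ r - c0 * v)
    = ((t ^+ r - 1) * v ^+ (r - 1) == t * c0 ^+ q - c0).
Proof.
move=> v_neq0 vq; have vr : v ^+ r = v ^+ (r - 1) * v.
  by rewrite -exprSr subn1 prednK // r_gt0.
rewrite exprBq exprMn exprAC vq exprMn -subr_eq0 vr.
have -> : t ^+ r * (v ^+ (r - 1) * v) - c0 ^+ q * (t * v) - (v ^+ (r - 1) * v - c0 * v)
    = ((t ^+ r - 1) * v ^+ (r - 1) - (t * c0 ^+ q - c0)) * v by ring.
by rewrite mulf_eq0 (negbTE v_neq0) orbF subr_eq0.
Qed.

Definition cond_i := (b^-1 * c) ^+ ((q + 1) %/ 2) = -1.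
Definition cond_ii := forall w : F, w != 0 -> w ^+ (r - 1) = c0 ->
  w ^+ (q - 1) != b ^+ q / c.
Definition cond_iii := forall w : F, w != 0 ->
  ((b^-1 * c ^+ q) ^+ r - 1) * w ^+ (r - 1) = b^-1 * c ^+ q * c0 ^+ q - c0 ->
  w ^+ (q - 1) != b ^+ q / c.

Section NormCondition.

Hypotheses (b_neq0 : b != 0) (c_neq0 : c != 0) (norm_bc : normF q b = normF q c).

Let cq_expr : c ^+ q = b ^+ q.+1 / c.
Proof. by rewrite [b ^+ _]norm_bc /normF exprSr mulfK. Qed.

Lemma bc_ratio : b^-1 * c ^+ q = b ^+ q / c.
Proof. by rewrite cq_expr exprS; field; rewrite b_neq0 c_neq0. Qed.

Lemma bc_ratio_norm : (b ^+ q / c) ^+ q.+1 = 1.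
Proof.
rewrite exprS expr_div_n exprqq cq_expr exprS.
by field; rewrite b_neq0 c_neq0 expf_neq0.
Qed.

Lemma M_lin_exprq (u : F) : M_lin u ^+ q = b^-1 * c ^+ q * M_lin u.
Proof.
rewrite /M_lin exprDq !exprMn exprqq cq_expr exprS.
by field; rewrite b_neq0 c_neq0.
Qed.

Lemma M_lin_eq0 (u : F) : u != 0 -> (M_lin u == 0) = (u ^+ (q - 1) == - (b^-1 * c)).
Proof.
move=> u_neq0; rewrite /M_lin exprq_sub1 mulrA -mulrDl mulf_eq0 (negbTE u_neq0) orbF.
by rewrite addr_eq0 (can2_eq (mulKf b_neq0) (mulVKf b_neq0)) mulrN.
Qed.

Lemma M_lin_kernel :
  exists u0 : F, [/\ u0 != 0, u0 ^+ (q - 1) = - (b^-1 * c) & M_lin u0 = 0].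
Proof.
have [|u0 u0_neq0 u0_q1] := hilbert90 (t := - (b^-1 * c)).
  by rewrite exprN_q1 exprMn exprVn -!/(normF q _) norm_bc mulVf // expf_neq0.
by exists u0; split=> //; apply/eqP; rewrite M_lin_eq0 // u0_q1.
Qed.

Lemma conds_D_lin_neq0 (a x : F) :
  cond_i -> cond_iii -> a != 0 -> x != 0 -> D_lin a x != 0.
Proof.
move=> ci ciii a_neq0 x_neq0; apply/eqP => Dax; set u := x * a *+ 2.
(* The root makes L_lin u = - (a x^q + a^q x) a fixed point of x |-> x^q. *)
have u_neq0 : u != 0 by rewrite double_neq0 ?mulf_neq0.
have Lu : L_lin u = - (a * x ^+ q + a ^+ q * x).
  by apply/eqP; rewrite -addr_eq0 addrC; apply/eqP.
have [Mu0 | Mu_neq0] := eqVneq (M_lin u) 0.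
  have ax : a ^+ (q - 1) = - x ^+ (q - 1).
    move/eqP: Lu; rewrite L_lin_eq0 // eq_sym oppr_eq0 !exprq_sub1.
    have -> : a * (x ^+ (q - 1) * x) + a ^+ (q - 1) * a * x
        = (a ^+ (q - 1) + x ^+ (q - 1)) * (a * x) by ring.
    by rewrite !mulf_eq0 (negbTE a_neq0) (negbTE x_neq0) !orbF addr_eq0 => /eqP.
  have bc : b^-1 * c = (x ^+ (q - 1)) ^+ 2.
    move/eqP: Mu0; rewrite M_lin_eq0 // /u -mulr_natr !exprMn two_exprq_sub1 ax.
    by rewrite mulr1 mulrN -expr2 => /eqP/oppr_inj.
  move: ci; rewrite /cond_i bc -!exprM -mulnA addn1 half_q1 expr_unit_q1 //.
  by move=> /eqP; rewrite -addr_eq0 -mulr2n (negbTE two_neq0).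
have vq1 : M_lin u ^+ (q - 1) = b ^+ q / c.
  by rewrite -bc_ratio; apply: (mulIf Mu_neq0); rewrite -exprq_sub1 M_lin_exprq.
have v_eqn : ((b^-1 * c ^+ q) ^+ r - 1) * M_lin u ^+ (r - 1)
    = b^-1 * c ^+ q * c0 ^+ q - c0.
  apply/eqP; rewrite -(L_fixedE Mu_neq0 (M_lin_exprq u)) -/(L_lin u) Lu.
  by rewrite exprNn_pchar // exprDq !exprMn !exprqq addrC.
by have := ciii _ Mu_neq0 v_eqn; rewrite vq1 eqxx.
Qed.

Lemma M_lin_preimage (v : F) : v ^+ q = b^-1 * c ^+ q * v -> M_lin (v / (c *+ 2)) = v.
Proof.
move=> vq; rewrite /M_lin expr_div_n vq -mulr_natr exprMn exprq_two.
by field; rewrite b_neq0 c_neq0 two_neq0 expf_neq0.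
Qed.

Lemma not_cond_iii_D_lin_root (v : F) : v != 0 -> v ^+ (q - 1) = b ^+ q / c ->
  ((b^-1 * c ^+ q) ^+ r - 1) * v ^+ (r - 1) = b^-1 * c ^+ q * c0 ^+ q - c0 ->
  exists a x : F, [/\ a != 0, x != 0 & D_lin a x = 0].
Proof.
move=> v_neq0 v_q1 v_eqn; have vq : v ^+ q = b^-1 * c ^+ q * v.
  by rewrite exprq_sub1 v_q1 bc_ratio.
set l := v ^+ r - c0 * v; have lq : l ^+ q = l.
  by apply/eqP; rewrite (L_fixedE v_neq0 vq) v_eqn.
have l2q : (l / 2%:R) ^+ q = l / 2%:R by rewrite expr_div_n lq exprq_two.
have [u0 [u0_neq0 _ Mu0]] := M_lin_kernel.
have [th th_neq0 thq] := exists_exprq_oppr.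
(* The points y with M_lin (2 y) = v form the line y0 + F_q z0; match the norm
   of one of them with the norm of some w of trace -l. *)
set y0 := v / (c *+ 2) / 2%:R; set z0 := u0 / 2%:R.
have z0_neq0 : z0 != 0 by rewrite mulf_neq0 ?invr_neq0 ?two_neq0.
have [h hq y_norm] := norm_Fq_line y0 z0_neq0.
have [||||||s [rr [sq rrq norm_eq]]] :=
  Fq_sqr_meet (c1 := (y0 - h * z0) ^+ q * (y0 - h * z0)) (a1 := z0 ^+ q * z0)
              (c2 := (l / 2%:R) ^+ 2) (a2 := - th ^+ 2).
- by rewrite mulf_neq0 ?expf_neq0.
- by rewrite oppr_eq0 expf_neq0.
- by rewrite exprMn exprqq mulrC.
- by rewrite exprMn exprqq mulrC.
- by rewrite exprAC l2q.
- by rewrite exprNn_pchar // exprAC thq sqrrN.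
set y := y0 + (s - h) * z0; set w := rr * th - l / 2%:R.
have y2 : y *+ 2 = v / (c *+ 2) + (s - h) * u0.
  by rewrite -mulr_natr mulrDl -mulrA !mulfVK ?two_neq0.
have My : M_lin (y *+ 2) = v.
  rewrite y2 M_linD (M_linZ (k := s - h)) ?Mu0 ?mulr0 ?addr0 ?M_lin_preimage //.
  by rewrite exprBq sq hq.
have y_neq0 : y != 0.
  apply: contra_eq_neq My => ->.
  by rewrite mul0rn /M_lin expr0n gtn_eqF ?(ltnW q_gt1) // !mulr0 addr0 eq_sym.
apply: (D_lin_root_of_norm (w := w) y_neq0).
  by rewrite y_norm // norm_eq /w exprBq exprMn rrq thq l2q; ring.
by rewrite /L_lin My -/l /w exprBq exprMn rrq thq l2q; field; rewrite two_neq0.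
Qed.

Lemma not_cond_i_D_lin_root :
  ~ cond_i -> exists a x : F, [/\ a != 0, x != 0 & D_lin a x = 0].
Proof.
move=> not_ci; set s := b^-1 * c.
have s_half : s ^+ (q.+1 %/ 2) = 1.
  have : (s ^+ (q.+1 %/ 2)) ^+ 2 == 1.
    by rewrite -exprM mulnC half_q1 exprMn exprVn -!/(normF q _) norm_bc mulVf ?expf_neq0.
  by rewrite sqrf_eq1 => /orP[/eqP // | /eqP s_neg]; case: not_ci; rewrite /cond_i addn1.
(* Take x = l a with l^q = -l and 2 l a^2 in the kernel of M_lin; the square
   root a exists because (i) fails, i.e. (b^-1 c)^((q+1)/2) = 1. *)
have [u0 [u0_neq0 u0_q1 Mu0]] := M_lin_kernel.
have [l l_neq0 lq] := exists_exprq_oppr.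
have l_q1 : l ^+ (q - 1) = -1 by apply: (mulIf l_neq0); rewrite -exprq_sub1 lq mulN1r.
have z_q1 : (u0 / (l *+ 2)) ^+ (q - 1) = s.
  rewrite expr_div_n u0_q1 -mulr_natr exprMn l_q1 two_exprq_sub1.
  by rewrite mulr1 invrN invr1 mulrN1 opprK.
have [|a a_sq] := sqr_of_euler (z := u0 / (l *+ 2)); first by rewrite exprM z_q1.
have a_neq0 : a != 0.
  apply: contra_eq_neq a_sq => ->.
  by rewrite expr0n eq_sym mulf_neq0 ?invr_neq0 ?double_neq0.
have u0_eq : l * a * a *+ 2 = u0.
  by rewrite -mulrA -expr2 a_sq -mulrnAl mulrC divfK ?double_neq0.
exists a, (l * a); split; rewrite ?mulf_neq0 //.
by rewrite /D_lin u0_eq L_lin_eq0 // addr0 exprMn lq; ring.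
Qed.

Lemma planar_f_quad_iff : planar f_quad <-> cond_i /\ cond_iii.
Proof.
rewrite planar_f_quadE; split=> [D_neq0 | [ci ciii] a x]; last exact: conds_D_lin_neq0.
have no_root : ~ exists a x : F, [/\ a != 0, x != 0 & D_lin a x = 0].
  by case=> a [x [a_neq0 x_neq0]]; apply/eqP; apply: D_neq0.
split=> [|w w_neq0 w_eqn]; last first.
  by apply/eqP => w_q1; apply: no_root; apply: not_cond_iii_D_lin_root w_q1 w_eqn.
have [//|ci_false] := eqVneq ((b^-1 * c) ^+ ((q + 1) %/ 2)) (-1).
by case: no_root; apply: not_cond_i_D_lin_root => /eqP; rewrite (negbTE ci_false).
Qed.

Lemma cond_iii_ii : cond_iii -> cond_ii.
Proof.
move=> ciii w w_neq0 w_c0; apply/negP => /eqP w_q1.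
apply: (negP (ciii w w_neq0 _)); last by rewrite w_q1.
rewrite -bc_ratio in w_q1.
have wq : w ^+ q = b^-1 * c ^+ q * w by rewrite exprq_sub1 w_q1.
have c0q : c0 ^+ q = (b^-1 * c ^+ q) ^+ (r - 1) * c0 by rewrite -w_c0 exprAC wq exprMn.
by rewrite w_c0 c0q mulrA -exprS subn1 prednK ?r_gt0 //; ring.
Qed.

End NormCondition.

End OddCharacteristic.

End QuadraticExtension.

Theorem theorem2p5 (p m k : nat) (F : finFieldType)
  (hp : prime p) (hodd : odd p) (hF : #|F| = ((p ^ m) ^ 2)%N)
  (hk0 : (0 < k)%N) (hkm : (k < m)%N)
  (b c c0 : F) (hb : b != 0) (hc : c != 0)
  (hN : normF (p ^ m)%N b = normF (p ^ m)%N c) :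
  let q := (p ^ m)%N in
  let condii := forall w : F, w != 0 -> w ^+ (p ^ k - 1)%N = c0 ->
                  w ^+ (q - 1)%N != b ^+ q / c in
  let condiii := forall w : F, w != 0 ->
                  ((b^-1 * c ^+ q) ^+ (p ^ k)%N - 1) * w ^+ (p ^ k - 1)%N
                    = b^-1 * c ^+ q * c0 ^+ q - c0 ->
                  w ^+ (q - 1)%N != b ^+ q / c in
  (planar (fpoly p m k b c c0) <->
     [/\ (b^-1 * c) ^+ ((q + 1) %/ 2)%N = -1, condii & condiii])
  /\
  (let d := gcdn (p ^ k - 1)%N (q ^ 2 - 1)%N in
   (d %| q - 1)%N ->
   (condii <-> c0 ^+ ((q - 1) %/ d)%N != (b ^+ q / c) ^+ ((p ^ k - 1) %/ d)%N)
   /\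
   (condiii <->
      (b^-1 * c ^+ q * c0 ^+ q - c0) ^+ ((q - 1) %/ d)%N
        != ((b^-1 * c ^+ q) ^+ (p ^ k)%N - 1) ^+ ((q - 1) %/ d)%N
           * (b ^+ q / c) ^+ ((p ^ k - 1) %/ d)%N)).
Proof.
move=> q condii condiii.
have p_pchar : p \in [pchar F].
  by apply: (card_finPcharP (n := (m * 2)%N)) hp; rewrite expnM.
have pchar_pow j : [pchar F].-nat (p ^ j)%N by rewrite pnatX (pnatE _ hp) p_pchar.
have q_odd : odd q by rewrite oddX hodd orbT.
have hplan := planar_f_quad_iff hF q_odd (pchar_pow m) c0 (pchar_pow k) hb hc hN.
split.
  rewrite [planar _]hplan; split=> [[ci ciii] | [ci _ ciii]] //.
  by split=> //; exact: (cond_iii_ii hF (pchar_pow k) hb hc hN ciii).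
move=> d d_dvd.
have e_gt0 : (0 < p ^ k - 1)%N by rewrite subn_gt0 -{1}(expn0 p) ltn_exp2l ?prime_gt1.
have crit := no_root_criterion hF e_gt0 (bc_ratio_norm hF hb hc hN) d_dvd.
split; last exact: crit.
rewrite -[X in _ != X]mul1r -(expr1n F ((q - 1) %/ d)) -crit.
by split=> no_root w w_neq0 w_e; apply: no_root; rewrite ?mul1r // -w_e mul1r.
Qed.
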